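(* (Parity.) There exists an $n$-RASP-L program with $T(n)=n$ that solves the $n$-bit parity task: for every $n\ge 1$, every $n'\ge 0$ and every binary sequence $x_1,\dots,x_n\in\{0,1\}$, the program maps the input sequence $$x_1\,\dots\,x_n\;\texttt{>}\;\underbrace{\texttt{\#}\,\dots\,\texttt{\#}}_{n'}$$ (of length $n+1+n'$) to an output sequence of the same length of the form $$\underbrace{*\,\dots\,*}_{n}\; y\;\underbrace{\texttt{\#}\,\dots\,\texttt{\#}}_{n'},$$ where $y=x_1\oplus x_2\oplus\cdots\oplus x_n$ is the parity of the input bits.
   Context: Tokens: $\texttt{>}$ is a special end-of-query (EOQ) token, $\texttt{\#}$ is a special end-of-sequence (EOS) token, and $*$ in the output denotes a position whose value is ignored (any value is allowed there). RASP-L is a restricted programming language modelling decoder-only (causal) Transformers. A RASP-L program takes an integer-token sequence of arbitrary length and returns a sequence of the same length. It is straight-line code (no branching, no loops), each line being a call to a core primitive or to another RASP-L program. Core primitives: $\mathrm{indices}(x)$ (the sequence $0,1,\dots,|x|-1$); $\mathrm{full}(x,c)$ (constant sequence); elementwise maps applying a fixed function to the tokens at each position of one or more sequences; and the causal attention operation $\mathrm{kqv}(k,q,v,\mathrm{pred},\mathrm{default})$, whose output at position $i$ is the (integer-truncated) mean of $v_j$ over all $j\le i$ with $\mathrm{pred}(k_j,q_i)$ true, or $\mathrm{default}$ if no such $j$ exists. Operations on token indices are restricted to order comparisons and successor/predecessor (e.g. $\mathrm{indices}(x)+1$); arbitrary index arithmetic is not allowed. For example, shifting a sequence right by one position is $\mathrm{kqv}(\mathrm{indices}(x)+1,\mathrm{indices}(x),x,=,0)$.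 An $n$-RASP-L program is a program $P$ for which there exist a function $T:\mathbb{N}\to\mathbb{N}$ and a RASP-L program $P'$ such that, on inputs of problem size $n$, $P$ consists of the sequential application of $P'$ for $T(n)$ steps (the paper allows fixed RASP-L pre-processing and post-processing steps, e.g. handling EOS/EOQ tokens, outside this loop). *)

From Stdlib Require Import ZArith List Bool.
Import ListNotations.
Open Scope Z_scope.

(** Tokens are integers. Special tokens: EOQ '>' and EOS '#'. *)
Definition EOQ : Z := 2.
Definition EOS : Z := 3.

(** Kinds of sequences: ordinary token-valued sequences, and index-valued
    sequences (derived from [indices]) on which only successor/predecessor
    and order comparisons are allowed. *)
Inductive kind := KTok | KIdx.

Definition kind_eqb (a b : kind) : bool :=
  match a, b with KTok, KTok | KIdx, KIdx => true | _, _ => false end.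

Inductive cmpop := CLt | CLe | CEq | CNe | CGe | CGt.

Definition cmpZ (c : cmpop) (a b : Z) : bool :=
  match c with
  | CLt => a <? b | CLe => a <=? b | CEq => a =? b
  | CNe => negb (a =? b) | CGe => b <=? a | CGt => b <? a
  end.

(** One line of straight-line code. Registers are referred to by their
    absolute number: register 0 is the input, register k+1 is the result
    of line k. *)
Inductive instr :=
| IIndices (r : nat)
| IFull (r : nat) (c : Z)
| IMap (f : list Z -> Z) (rs : list nat)
| ISucc (r : nat)
| IPred (r : nat)
| ICmp (c : cmpop) (r1 r2 : nat)
| IKqvTok (k q v : nat) (p : Z -> Z -> bool) (d : Z)
| IKqvIdx (k q v : nat) (c : cmpop) (d : Z).

Definition program := list instr.

Definition instr_kind (ks : list kind) (i : instr) : option kind :=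
  let ok r := Nat.ltb r (length ks) in
  let isk r k := ok r && kind_eqb (nth r ks KTok) k in
  match i with
  | IIndices r => if ok r then Some KIdx else None
  | IFull r _ => if ok r then Some KTok else None
  | IMap _ rs =>
      match rs with
      | [] => None
      | _ => if forallb (fun r => isk r KTok) rs then Some KTok else None
      end
  | ISucc r | IPred r => if isk r KIdx then Some KIdx else None
  | ICmp _ r1 r2 => if isk r1 KIdx && isk r2 KIdx then Some KTok else None
  | IKqvTok k q v _ _ =>
      if isk k KTok && isk q KTok && isk v KTok then Some KTok else None
  | IKqvIdx k q v _ _ =>
      if isk k KIdx && isk q KIdx && isk v KTok then Some KTok else None
  end.

Fixpoint check_prog (ks : list kind) (p : program) : option (list kind) :=
  match p with
  | [] => Some ks
  | i :: p' =>
      match instr_kind ks i with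
      | Some k => check_prog (ks ++ [k]) p'
      | None => None
      end
  end.

Definition is_raspl (p : program) : Prop :=
  match check_prog [KTok] p with
  | Some ks => last ks KIdx = KTok
  | None => False
  end.

(** Causal attention: at position i, the truncated mean of v_j over
    j <= i with pred (k_j) (q_i), or the default if there is no such j. *)
Definition kqv_sem (L : nat) (k q v : list Z) (pred : Z -> Z -> bool) (d : Z)
  : list Z :=
  map (fun i =>
         let js := filter (fun j => pred (nth j k 0) (nth i q 0)) (seq 0 (S i)) in
         match js with
         | [] => d
         | _ => Z.quot (fold_right Z.add 0 (map (fun j => nth j v 0) js))
                       (Z.of_nat (length js))
         end)
      (seq 0 L).

Definition eval_instr (env : list (list Z)) (i : instr) : list Z :=
  let reg r := nth r env [] in
  let get r j := nth j (reg r) 0 in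
  let L := length (reg 0%nat) in
  match i with
  | IIndices r => map Z.of_nat (seq 0 (length (reg r)))
  | IFull r c => repeat c (length (reg r))
  | IMap f rs => map (fun j => f (map (fun r => get r j) rs)) (seq 0 L)
  | ISucc r => map (fun z => z + 1) (reg r)
  | IPred r => map (fun z => z - 1) (reg r)
  | ICmp c r1 r2 =>
      map (fun j => if cmpZ c (get r1 j) (get r2 j) then 1 else 0) (seq 0 L)
  | IKqvTok k q v p d => kqv_sem L (reg k) (reg q) (reg v) p d
  | IKqvIdx k q v c d => kqv_sem L (reg k) (reg q) (reg v) (cmpZ c) d
  end.

Fixpoint run_env (env : list (list Z)) (p : program) : list (list Z) :=
  match p with
  | [] => env
  | i :: p' => run_env (env ++ [eval_instr env i]) p'
  end.

Definition run (p : program) (x : list Z) : list Z :=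
  last (run_env [x] p) [].

Definition run_looped (pre body post : program) (T : nat -> nat) (n : nat)
  (x : list Z) : list Z :=
  run post (Nat.iter (T n) (run body) (run pre x)).

Definition parity (xs : list Z) : Z := (fold_right Z.add 0 xs) mod 2.

From Stdlib Require Import ZArith List Lia Bool.
Import ListNotations.
Open Scope Z_scope.

(* The EOQ slot becomes an accumulator holding the running parity. Each loop
   step lets every position copy its left neighbour, read through attention
   with key [i + 1] and query [i], so the input bits move one place to the
   right; the accumulator instead absorbs the bit arriving from its left, and
   EOS tokens stay put. After n steps every bit has been absorbed, and the
   post-processing map decodes the accumulator into the parity bit. *)

Lemma nth_map_seq0 {A} (F : nat -> A) (L j : nat) (d : A) :
  (j < L)%nat -> nth j (map F (seq 0 L)) d = F j.
Proof.
  intros Hj.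
  rewrite (nth_indep _ d (F 0%nat)) by (rewrite length_map, length_seq; lia).
  rewrite map_nth, seq_nth by lia. reflexivity.
Qed.

Lemma map_nth_seq0 {A B} (F : A -> B) (x : list A) (d : A) :
  map (fun j => F (nth j x d)) (seq 0 (length x)) = map F x.
Proof.
  induction x as [|a x IH]; [reflexivity|].
  cbn [length seq map]. rewrite <- seq_shift, map_map. cbn. now rewrite IH.
Qed.

Lemma last_repeat {A} (a : A) (m : nat) : last (repeat a m) a = a.
Proof. induction m as [|[|m] IH]; [reflexivity..|exact IH]. Qed.

Lemma last_cons_indep {A} (z : A) (l : list A) (d d' : A) :
  last (z :: l) d = last (z :: l) d'.
Proof. revert z. induction l as [|y l IH]; intros z; [reflexivity|apply IH]. Qed.

Definition map_tokens (h : Z -> Z) : program :=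
  [IMap (fun l => h (hd 0 l)) [0%nat]].

Lemma map_tokens_raspl (h : Z -> Z) : is_raspl (map_tokens h).
Proof. reflexivity. Qed.

Lemma run_map_tokens (h : Z -> Z) (x : list Z) : run (map_tokens h) x = map h x.
Proof. exact (map_nth_seq0 h x 0). Qed.

Definition prev_nth (d : Z) (v : list Z) (j : nat) : Z :=
  match j with 0%nat => d | S j' => nth j' v 0 end.

Lemma filter_pred_index (j : nat) :
  filter (fun i => Z.of_nat i + 1 =? Z.of_nat j) (seq 0 (S j)) =
  match j with 0%nat => [] | S i => [i] end.
Proof.
  destruct j as [|i]; [reflexivity|].
  rewrite seq_S, seq_S, !filter_app, (filter_ext_in _ (fun _ => false)), filter_false.
  2:{ intros x Hx. apply in_seq in Hx. apply Z.eqb_neq. lia. }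
  cbn [filter app Nat.add].
  replace (Z.of_nat i + 1 =? Z.of_nat (S i)) with true by (symmetry; apply Z.eqb_eq; lia).
  replace (Z.of_nat (S i) + 1 =? Z.of_nat (S i)) with false by (symmetry; apply Z.eqb_neq; lia).
  reflexivity.
Qed.

Lemma kqv_shift_right (L : nat) (v : list Z) (d : Z) :
  let idx := map Z.of_nat (seq 0 L) in
  kqv_sem L (map (fun z => z + 1) idx) idx v (cmpZ CEq) d =
  map (prev_nth d v) (seq 0 L).
Proof.
  apply map_ext_in. intros j Hj. apply in_seq in Hj.
  rewrite (filter_ext_in _ (fun i => Z.of_nat i + 1 =? Z.of_nat j)).
  2:{ intros i Hi. apply in_seq in Hi. cbn [cmpZ].
      rewrite map_map, !nth_map_seq0 by lia. reflexivity. }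
  rewrite filter_pred_index. destruct j as [|i]; [reflexivity|].
  cbn. rewrite Z.add_0_r. apply Z.quot_1_r.
Qed.

Fixpoint zip_prev (f : Z -> Z -> Z) (p : Z) (s : list Z) : list Z :=
  match s with [] => [] | c :: cs => f c p :: zip_prev f c cs end.

Lemma map_prev_nth_zip_prev (f : Z -> Z -> Z) (d : Z) (s : list Z) :
  map (fun j => f (nth j s 0) (prev_nth d s j)) (seq 0 (length s)) = zip_prev f d s.
Proof.
  revert d. induction s as [|c s IH]; intros d; [reflexivity|].
  cbn [length seq map]. rewrite <- seq_shift, map_map. cbn.
  f_equal. rewrite <- (IH c). apply map_ext. intros [|j]; reflexivity.
Qed.

Definition list_fun2 (f : Z -> Z -> Z) (l : list Z) : Z :=
  match l with [c; p] => f c p | _ => 0 end.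

Definition prev_map (f : Z -> Z -> Z) (d : Z) : program :=
  [IIndices 0; ISucc 1; IKqvIdx 2 1 0 CEq d; IMap (list_fun2 f) [0%nat; 3%nat]].

Lemma prev_map_raspl (f : Z -> Z -> Z) (d : Z) : is_raspl (prev_map f d).
Proof. reflexivity. Qed.

Lemma run_prev_map (f : Z -> Z -> Z) (d : Z) (s : list Z) :
  run (prev_map f d) s = zip_prev f d s.
Proof.
  unfold run, prev_map. simpl. rewrite kqv_shift_right.
  rewrite <- map_prev_nth_zip_prev. apply map_ext_in. intros j Hj. apply in_seq in Hj.
  rewrite nth_map_seq0 by lia. reflexivity.
Qed.

Lemma zip_prev_app (f : Z -> Z -> Z) (p : Z) (l1 l2 : list Z) :
  zip_prev f p (l1 ++ l2) = zip_prev f p l1 ++ zip_prev f (last l1 p) l2.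
Proof.
  revert p. induction l1 as [|a l1 IH]; intros p; [reflexivity|].
  cbn [app zip_prev]. rewrite IH. destruct l1 as [|z l1]; [reflexivity|].
  rewrite (last_cons_indep z l1 a p). reflexivity.
Qed.

Lemma zip_prev_repeat_fixed (f : Z -> Z -> Z) (a : Z) (m : nat) :
  f a a = a -> zip_prev f a (repeat a m) = repeat a m.
Proof. intros Ha. induction m as [|m IH]; cbn; [|rewrite Ha, IH]; reflexivity. Qed.

Lemma zip_prev_repeat_absorbing (f : Z -> Z -> Z) (a p : Z) (m : nat) :
  (forall q, f a q = a) -> zip_prev f p (repeat a m) = repeat a m.
Proof. intros Ha. revert p. induction m as [|m IH]; intros p; cbn; [|rewrite Ha, IH]; reflexivity. Qed.

Lemma zip_prev_shift (f : Z -> Z -> Z) (P : Z -> Prop) (p b : Z) (u : list Z) :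
  (forall c q, P c -> f c q = q) -> Forall P u -> P b ->
  zip_prev f p (u ++ [b]) = p :: u.
Proof.
  intros Hf Hu Hb. revert p. induction Hu as [|c u Hc Hu IH]; intros p; cbn.
  - now rewrite Hf.
  - rewrite Hf, IH by assumption. reflexivity.
Qed.

Definition bit (b : Z) : Prop := b = 0 \/ b = 1.

Definition PAD : Z := 4.

(* Tokens 10 and 11 stay clear of the bits, EOQ, EOS and PAD. *)
Definition acc (b : Z) : Z := 10 + b.

Definition parity_cell (c p : Z) : Z :=
  if c =? EOS then EOS
  else if (c =? acc 0) || (c =? acc 1) then
    (if (p =? 0) || (p =? 1) then acc ((c - acc 0 + p) mod 2) else c)
  else p.

Lemma parity_cell_bit (c q : Z) : bit c -> parity_cell c q = q.
Proof. intros [-> | ->]; reflexivity. Qed.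

Lemma parity_bit (v : list Z) : bit (parity v).
Proof.
  unfold bit, parity. pose proof (Z.mod_pos_bound (fold_right Z.add 0 v) 2). lia.
Qed.

Lemma parity_cons (b : Z) (v : list Z) : parity (b :: v) = (parity v + b) mod 2.
Proof. unfold parity. cbn. rewrite Zplus_mod_idemp_l. f_equal. lia. Qed.

Lemma parity_cell_acc (b : Z) (v : list Z) :
  bit b -> parity_cell (acc (parity v)) b = acc (parity (b :: v)).
Proof.
  intros Hb. rewrite parity_cons.
  destruct (parity_bit v) as [-> | ->], Hb as [-> | ->]; reflexivity.
Qed.

Definition parity_pre : program :=
  map_tokens (fun c => if c =? EOQ then acc 0 else c).

Definition parity_body : program := prev_map parity_cell PAD.

Definition parity_post : program :=
  map_tokens (fun c => if c =? acc 0 then 0 else if c =? acc 1 then 1 else c).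

(* Invariant of the loop: [u ++ v] is the input, and each bit of [v] has
   entered the accumulator and left a PAD at the front. *)
Definition parity_state (n' : nat) (u v : list Z) : list Z :=
  repeat PAD (length v) ++ u ++ acc (parity v) :: repeat EOS n'.

Lemma parity_body_step (n' : nat) (u v : list Z) (b : Z) :
  Forall bit u -> bit b ->
  run parity_body (parity_state n' (u ++ [b]) v) = parity_state n' u (b :: v).
Proof.
  intros Hu Hb. unfold parity_body, parity_state. rewrite run_prev_map.
  rewrite zip_prev_app, zip_prev_repeat_fixed, last_repeat by reflexivity.
  rewrite zip_prev_app, (zip_prev_shift _ bit), last_last by auto using parity_cell_bit.
  cbn [zip_prev]. rewrite parity_cell_acc, zip_prev_repeat_absorbing by auto.
  cbn [length repeat]. rewrite repeat_cons, <- app_assoc. reflexivity.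
Qed.

Lemma parity_body_iter (n' : nat) (u v : list Z) :
  Forall bit u ->
  Nat.iter (length u) (run parity_body) (parity_state n' u v) = parity_state n' [] (u ++ v).
Proof.
  revert v. induction u as [|b u IH] using rev_ind; intros v Hu; [reflexivity|].
  apply Forall_app in Hu as [Hu Hb]. inversion_clear Hb.
  rewrite length_app, Nat.add_1_r, Nat.iter_succ_r, parity_body_step, IH by assumption.
  rewrite <- app_assoc. reflexivity.
Qed.

Lemma map_id_on {A} (h : A -> A) (P : A -> Prop) (l : list A) :
  (forall c, P c -> h c = c) -> Forall P l -> map h l = l.
Proof.
  intros Hh Hl. rewrite <- (map_id l) at 2. apply map_ext_in.
  intros c Hc. apply Hh. exact (proj1 (Forall_forall P l) Hl c Hc).
Qed.

Lemma run_parity_pre (n' : nat) (xs : list Z) :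
  Forall bit xs ->
  run parity_pre (xs ++ [EOQ] ++ repeat EOS n') = parity_state n' xs [].
Proof.
  intros Hxs. unfold parity_pre, parity_state. rewrite run_map_tokens, !map_app, map_repeat.
  rewrite (map_id_on _ bit) by (auto || now intros c [-> | ->]). reflexivity.
Qed.

Lemma run_parity_post (n' : nat) (xs : list Z) :
  run parity_post (parity_state n' [] xs) =
  repeat PAD (length xs) ++ parity xs :: repeat EOS n'.
Proof.
  unfold parity_post, parity_state. rewrite run_map_tokens, map_app, map_repeat. cbn.
  rewrite map_repeat. destruct (parity_bit xs) as [-> | ->]; reflexivity.
Qed.

Lemma parity_run_looped (n n' : nat) (xs : list Z) :
  length xs = n -> Forall bit xs ->
  run_looped parity_pre parity_body parity_post (fun m => m) n
    (xs ++ [EOQ] ++ repeat EOS n') =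
  repeat PAD n ++ parity xs :: repeat EOS n'.
Proof.
  intros <- Hxs. unfold run_looped.
  rewrite run_parity_pre, parity_body_iter, app_nil_r, run_parity_post by exact Hxs.
  reflexivity.
Qed.

Theorem proposition1 :
  exists (pre body post : program),
    is_raspl pre /\ is_raspl body /\ is_raspl post /\
    forall (n n' : nat) (xs : list Z),
      (1 <= n)%nat -> length xs = n ->
      Forall (fun b => b = 0 \/ b = 1) xs ->
      let out := run_looped pre body post (fun m => m) n
                   (xs ++ [EOQ] ++ repeat EOS n') in
      length out = (n + 1 + n')%nat /\
      nth n out 0 = parity xs /\
      (forall k, (k < n')%nat -> nth (n + 1 + k) out 0 = EOS).
Proof.
  exists parity_pre, parity_body, parity_post.
  split; [apply map_tokens_raspl|]. split; [apply prev_map_raspl|].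
  split; [apply map_tokens_raspl|].
  intros n n' xs _ Hlen Hxs out. subst out.
  rewrite parity_run_looped by assumption.
  split; [|split].
  - rewrite length_app, repeat_length. cbn. rewrite repeat_length. lia.
  - rewrite app_nth2 by (rewrite repeat_length; lia).
    rewrite repeat_length, Nat.sub_diag. reflexivity.
  - intros k Hk. rewrite app_nth2 by (rewrite repeat_length; lia).
    rewrite repeat_length.
    replace (n + 1 + k - n)%nat with (S k) by lia. apply nth_repeat_lt. exact Hk.
Qed.
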